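(* Let $\alpha>0$ and $k\ge 2$ be an integer. Then $$\sum_{\sigma\in\mathfrak S_k}\det\Big[\Gamma(j+\sigma(i)\alpha)\prod_{r=1}^{i-1}(r+\sigma(i)\alpha)\Big]_{1\le i,j\le k}=\alpha^{k(k-1)}\prod_{j=1}^k ((j-1)!)^2\,\Gamma(1+\alpha j)>0.$$
   Context: $\mathfrak S_k$ is the symmetric group on $\{1,\dots,k\}$; in the matrix, $i$ is the row index and $j$ the column index, and empty products equal $1$. *)

From Stdlib Require Import Reals ClassicalEpsilon.
From mathcomp Require Import all_boot all_fingroup.
Set Implicit Arguments. Unset Strict Implicit. Unset Printing Implicit Defensive.

Local Open Scope R_scope.

Definition Gamma_integrand (x t : R) : R := Rpower t (x - 1) * exp (- t).

Definition is_Gamma (x l : R) : Prop :=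
  forall eps : R, 0 < eps ->
    exists d B : R, 0 < d <= B /\
      forall a b : R, 0 < a < d -> B < b ->
        exists pr : Riemann_integrable (Gamma_integrand x) a b,
          Rabs (RiemannInt pr - l) < eps.

(* Euler's Gamma function (meaningful for x > 0). *)
Definition Gamma (x : R) : R := epsilon (inhabits 0) (is_Gamma x).

Definition rdet (k : nat) (A : 'I_k -> 'I_k -> R) : R :=
  \big[Rplus/0]_(s : 'S_k)
     ((if odd_perm s then -1 else 1) * \big[Rmult/1]_(i < k) A i (s i)).

(* Since Gamma (j + 1 + y) = Gamma (1 + y) (y + 1) ... (y + j), the (i, j) entry of the
   sigma-th matrix is c_m Q_i(y_m) Q_j(y_m) with m = sigma(i), y_m = m alpha,
   c_m = Gamma (1 + y_m) and Q_j the monic polynomial (X + 1) ... (X + j).  Factoring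
   c_m Q_i(y_m) out of row i leaves the rows of [Q_j(y_m)] permuted by sigma, so summing
   over sigma gives (prod_m c_m) det [Q_j(y_m)]^2.  The Q_j being monic of degree j,
   det [Q_j(y_m)] is the Vandermonde determinant prod_(m < n) (n - m) alpha
   = alpha^(k(k-1)/2) prod_j (j-1)!.
   The recursion Gamma (x + 1) = x Gamma x comes from integrating by parts; it is only
   needed, and only proved, for x >= 1, where the integrand is bounded near 0. *)

From Stdlib Require Import Reals Lra Lia ClassicalEpsilon.
From Coquelicot Require Import Coquelicot.
Local Open Scope R_scope.

Lemma Gamma_integrand_pos x t : 0 < Gamma_integrand x t.
Proof. unfold Gamma_integrand, Rpower. apply Rmult_lt_0_compat; apply exp_pos. Qed.

Lemma continuous_Gamma_integrand x t : 0 < t -> continuous (Gamma_integrand x) t.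
Proof.
intros Ht. apply (@ex_derive_continuous R_AbsRing R_NormedModule).
unfold Gamma_integrand, Rpower. auto_derive. exact Ht.
Qed.

Lemma ex_RInt_Gamma_integrand x a b : 0 < a -> 0 < b -> ex_RInt (Gamma_integrand x) a b.
Proof.
intros Ha Hb. apply (@ex_RInt_continuous R_CompleteNormedModule).
intros t Ht. apply continuous_Gamma_integrand.
assert (0 < Rmin a b) by (apply Rmin_case; lra). lra.
Qed.

Definition Gamma_partial x a b := RInt (Gamma_integrand x) a b.

Lemma Gamma_partial_ge0 x a b : 0 < a <= b -> 0 <= Gamma_partial x a b.
Proof.
intros Hab. apply RInt_ge_0; [lra | apply ex_RInt_Gamma_integrand; lra |].
intros t _. left. apply Gamma_integrand_pos.
Qed.

Lemma Gamma_partial_Chasles x a b c : 0 < a -> 0 < b -> 0 < c ->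
  Gamma_partial x a b + Gamma_partial x b c = Gamma_partial x a c.
Proof.
intros. apply (@RInt_Chasles R_CompleteNormedModule); apply ex_RInt_Gamma_integrand; lra.
Qed.

Lemma Gamma_partial_le x a b a' b' : 0 < a' <= a -> a <= b -> b <= b' ->
  Gamma_partial x a b <= Gamma_partial x a' b'.
Proof.
intros. rewrite <- (Gamma_partial_Chasles x a' a b'), <- (Gamma_partial_Chasles x a b b') by lra.
pose proof (Gamma_partial_ge0 x a' a ltac:(lra)).
pose proof (Gamma_partial_ge0 x b b' ltac:(lra)). lra.
Qed.

Lemma is_GammaE x l : is_Gamma x l <->
  forall eps, 0 < eps -> exists d B, 0 < d <= B /\
    forall a b, 0 < a < d -> B < b -> Rabs (Gamma_partial x a b - l) < eps.
Proof.
split; intros H eps Heps; destruct (H eps Heps) as [d [B [HdB HI]]];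
  exists d, B; split; try exact HdB; intros a b Ha Hb.
- destruct (HI a b Ha Hb) as [pr Hpr]. unfold Gamma_partial. rewrite (RInt_Reals _ _ _ pr). exact Hpr.
- exists (ex_RInt_Reals_0 _ _ _ (ex_RInt_Gamma_integrand x a b ltac:(lra) ltac:(lra))).
  rewrite <- RInt_Reals. exact (HI a b Ha Hb).
Qed.

Lemma is_Gamma_unique x l1 l2 : is_Gamma x l1 -> is_Gamma x l2 -> l1 = l2.
Proof.
rewrite !is_GammaE. intros H1 H2. apply NNPP. intros Hne.
set (eps := Rabs (l1 - l2) / 2).
assert (Heps : 0 < eps) by (unfold eps; pose proof (Rabs_pos_lt (l1 - l2) ltac:(lra)); lra).
destruct (H1 eps Heps) as [d1 [B1 [Hd1 HH1]]].
destruct (H2 eps Heps) as [d2 [B2 [Hd2 HH2]]].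
set (a := Rmin d1 d2 / 2). set (b := Rmax B1 B2 + 1).
pose proof (Rmin_l d1 d2). pose proof (Rmin_r d1 d2).
pose proof (Rmin_glb_lt d1 d2 0 ltac:(lra) ltac:(lra)).
pose proof (Rmax_l B1 B2). pose proof (Rmax_r B1 B2).
specialize (HH1 a b ltac:(unfold a; lra) ltac:(unfold b; lra)).
specialize (HH2 a b ltac:(unfold a; lra) ltac:(unfold b; lra)).
pose proof (Rabs_triang (l1 - Gamma_partial x a b) (Gamma_partial x a b - l2)).
rewrite <- Rabs_Ropp, Ropp_minus_distr in HH1.
replace (l1 - Gamma_partial x a b + (Gamma_partial x a b - l2)) with (l1 - l2) in * by ring.
unfold eps in *. lra.
Qed.

Lemma exp_le_exp a b : a <= b -> exp a <= exp b.
Proof. intros [H | ->]; [left; apply exp_increasing |]; easy. Qed.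

Lemma pow_le_exp_half n t : (0 < n)%nat -> 0 <= t -> t ^ n <= (2 * INR n) ^ n * exp (t / 2).
Proof.
intros Hn Ht.
assert (Hn' : 0 < INR n) by (apply lt_0_INR; exact Hn).
set (u := t / (2 * INR n)).
assert (Hu : 0 <= u) by (unfold u; apply Rle_mult_inv_pos; lra).
replace t with (2 * INR n * u) at 1 by (unfold u; field; lra).
replace (t / 2) with (INR n * u) by (unfold u; field; lra).
rewrite Rpow_mult_distr. apply Rmult_le_compat_l; [apply pow_le; lra |].
replace (exp (INR n * u)) with (exp u ^ n)
  by (rewrite <- Rpower_pow by apply exp_pos; unfold Rpower; rewrite ln_exp; reflexivity).
apply pow_incr. pose proof (exp_ineq1_le u). lra.
Qed.

Lemma Rpower_le_1_plus_pow t c n : 0 < t -> 0 <= c <= INR n -> Rpower t c <= 1 + t ^ n.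
Proof.
intros Ht Hc. pose proof (pow_le t n ltac:(lra)).
destruct (Rle_or_lt t 1) as [Ht1 | Ht1].
- assert (Hle : Rpower t c <= Rpower 1 c) by (apply Rle_Rpower_l; lra).
  unfold Rpower at 2 in Hle. rewrite ln_1, Rmult_0_r, exp_0 in Hle. lra.
- assert (Hle : Rpower t c <= Rpower t (INR n)) by (apply Rle_Rpower; lra).
  rewrite Rpower_pow in Hle by lra. lra.
Qed.

Lemma Gamma_integrand_le_exp_half x : 1 <= x ->
  exists M, 0 < M /\ forall t, 0 < t -> Gamma_integrand x t <= M * exp (- t / 2).
Proof.
intros Hx. destruct (INR_unbounded (x - 1)) as [n Hn].
set (K := (2 * INR (S n)) ^ S n).
assert (HK : 0 <= K) by (apply pow_le; pose proof (pos_INR (S n)); lra).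
exists (1 + K). split; [lra |]. intros t Ht. unfold Gamma_integrand.
assert (Hp : Rpower t (x - 1) <= 1 + K * exp (t / 2)).
{ eapply Rle_trans. apply (Rpower_le_1_plus_pow t (x - 1) (S n)); [lra | rewrite S_INR; lra].
  pose proof (pow_le_exp_half (S n) t ltac:(lia) ltac:(lra)) as Hpow. fold K in Hpow. lra. }
assert (E : exp (t / 2) * exp (- t) = exp (- t / 2)) by (rewrite <- exp_plus; f_equal; field).
assert (exp (- t) <= exp (- t / 2)) by (apply exp_le_exp; lra).
pose proof (exp_pos (- t)). pose proof (exp_pos (t / 2)).
apply Rle_trans with ((1 + K * exp (t / 2)) * exp (- t)); [apply Rmult_le_compat_r; lra |].
rewrite Rmult_plus_distr_r, Rmult_assoc, E. nra.
Qed.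

Lemma Gamma_partial_bounded x : 1 <= x ->
  exists C, forall a b, 0 < a <= b -> Gamma_partial x a b <= C.
Proof.
intros Hx. destruct (Gamma_integrand_le_exp_half x Hx) as [M [HM HB]].
exists (2 * M). intros a b Hab.
assert (Hprim : forall t, is_derive (fun s => -2 * M * exp (- s / 2)) t (M * exp (- t / 2)))
  by (intros t; auto_derive; [easy | unfold Rdiv; field]).
assert (HI : RInt (fun t => M * exp (- t / 2)) a b = 2 * M * (exp (- a / 2) - exp (- b / 2))).
{ apply (@is_RInt_unique R_CompleteNormedModule).
  replace (2 * M * (exp (- a / 2) - exp (- b / 2)))
    with (minus (-2 * M * exp (- b / 2)) (-2 * M * exp (- a / 2)))
    by (unfold minus, plus, opp; simpl; ring).
  apply (@is_RInt_derive R_CompleteNormedModule (fun s => -2 * M * exp (- s / 2)));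
    intros t _; [apply Hprim |].
  apply (@ex_derive_continuous R_AbsRing R_NormedModule). auto_derive. easy. }
apply Rle_trans with (RInt (fun t => M * exp (- t / 2)) a b).
- apply RInt_le; [lra | apply ex_RInt_Gamma_integrand; lra | | intros t Ht; apply HB; lra].
  apply (@ex_RInt_continuous R_CompleteNormedModule). intros t _.
  apply (@ex_derive_continuous R_AbsRing R_NormedModule). auto_derive. easy.
- rewrite HI. assert (exp (- a / 2) <= 1) by (rewrite <- exp_0; apply exp_le_exp; lra).
  pose proof (exp_pos (- b / 2)). nra.
Qed.

(* Gamma x is the supremum of the partial integrals over [a, b] with a < 1 < b. *)
Lemma is_Gamma_ex x : 1 <= x -> exists l, is_Gamma x l /\ 0 < l.
Proof.
intros Hx.
set (E := fun y => exists a b, 0 < a < 1 /\ 1 < b /\ y = Gamma_partial x a b).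
assert (HE : bound E).
{ destruct (Gamma_partial_bounded x Hx) as [C HC]. exists C.
  intros y [a [b [Ha [Hb ->]]]]. apply HC. lra. }
assert (HE0 : E (Gamma_partial x (1/2) 2)) by (exists (1/2), 2; repeat split; lra).
destruct (completeness E HE (ex_intro _ _ HE0)) as [l [Hub Hlub]].
exists l. split.
- apply is_GammaE. intros eps Heps.
  assert (Hex : exists y, E y /\ l - eps < y).
  { apply NNPP. intros Hn. enough (l <= l - eps) by lra. apply Hlub. intros y Hy.
    apply Rnot_lt_le. intros Hlt. apply Hn. exists y. split; assumption. }
  destruct Hex as [y [[a0 [b0 [Ha0 [Hb0 ->]]]] Hly]].
  exists a0, b0. split; [lra |]. intros a b Ha Hb.
  assert (Gamma_partial x a b <= l) by (apply Hub; exists a, b; repeat split; lra).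
  assert (Gamma_partial x a0 b0 <= Gamma_partial x a b) by (apply Gamma_partial_le; lra).
  apply Rabs_def1; lra.
- assert (0 < Gamma_partial x 1 2).
  { apply RInt_gt_0; [lra | intros; apply Gamma_integrand_pos |].
    intros t Ht. apply continuous_Gamma_integrand. lra. }
  assert (Gamma_partial x 1 2 <= Gamma_partial x (1/2) 2) by (apply Gamma_partial_le; lra).
  pose proof (Hub _ HE0). lra.
Qed.

Lemma Gamma_correct x : 1 <= x -> is_Gamma x (Gamma x).
Proof.
intros Hx. destruct (is_Gamma_ex x Hx) as [l [Hl _]].
unfold Gamma. apply epsilon_spec. exists l. exact Hl.
Qed.

Lemma Gamma_pos x : 1 <= x -> 0 < Gamma x.
Proof.
intros Hx. destruct (is_Gamma_ex x Hx) as [l [Hl Hpos]].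
rewrite (is_Gamma_unique x _ _ (Gamma_correct x Hx) Hl). exact Hpos.
Qed.

Lemma Gamma_integrand_succ x t : Gamma_integrand (x + 1) t = Rpower t x * exp (- t).
Proof. unfold Gamma_integrand. replace (x + 1 - 1) with x by ring. reflexivity. Qed.

Lemma is_derive_Gamma_integrand_succ x t : 0 < t ->
  is_derive (fun s => - Gamma_integrand (x + 1) s) t
    (Gamma_integrand (x + 1) t - x * Gamma_integrand x t).
Proof.
intros Ht.
assert (H1 : is_derive (fun s => Rpower s x) t (x * Rpower t (x - 1)))
  by (apply is_derive_Reals, derivable_pt_lim_power, Ht).
assert (H2 : is_derive (fun s => exp (- s)) t (- exp (- t))) by (auto_derive; [easy | ring]).
pose proof (is_derive_opp _ _ _ (is_derive_mult _ _ _ _ _ H1 H2 Rmult_comm)) as H.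
apply (is_derive_ext (fun s => - (Rpower s x * exp (- s))));
  [intros s; rewrite Gamma_integrand_succ; reflexivity |].
rewrite Gamma_integrand_succ. unfold Gamma_integrand.
replace (Rpower t x * exp (- t) - x * (Rpower t (x - 1) * exp (- t))) with
  (opp (plus (mult (x * Rpower t (x - 1)) (exp (- t))) (mult (Rpower t x) (- exp (- t)))))
  by (unfold opp, plus, mult; simpl; ring).
exact H.
Qed.

Lemma Gamma_partial_succ x a b : 0 < a <= b ->
  Gamma_partial (x + 1) a b
  = Gamma_integrand (x + 1) a - Gamma_integrand (x + 1) b + x * Gamma_partial x a b.
Proof.
intros Hab.
assert (Hpos : forall t, Rmin a b <= t <= Rmax a b -> 0 < t)
  by (intros t Ht; rewrite Rmin_left in Ht by lra; lra).
assert (HI : is_RInt (fun t => Gamma_integrand (x + 1) t - x * Gamma_integrand x t) a b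
   (minus (- Gamma_integrand (x + 1) b) (- Gamma_integrand (x + 1) a))).
{ apply (@is_RInt_derive R_CompleteNormedModule (fun s => - Gamma_integrand (x + 1) s)).
  - intros t Ht. apply is_derive_Gamma_integrand_succ, Hpos, Ht.
  - intros t Ht. pose proof (Hpos t Ht).
    apply (@ex_derive_continuous R_AbsRing R_NormedModule). unfold Gamma_integrand, Rpower.
    auto_derive. repeat split; lra. }
assert (HJ : is_RInt (fun t => x * Gamma_integrand x t) a b (x * Gamma_partial x a b))
  by (apply (@is_RInt_scal R_NormedModule), (@RInt_correct R_CompleteNormedModule),
        ex_RInt_Gamma_integrand; lra).
apply (@is_RInt_unique R_CompleteNormedModule).
apply (@is_RInt_ext R_NormedModule
         (fun t => plus (Gamma_integrand (x + 1) t - x * Gamma_integrand x t)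
                        (x * Gamma_integrand x t)));
  [intros t _; unfold plus; simpl; ring |].
replace (Gamma_integrand (x + 1) a - Gamma_integrand (x + 1) b + x * Gamma_partial x a b) with
  (plus (minus (- Gamma_integrand (x + 1) b) (- Gamma_integrand (x + 1) a)) (x * Gamma_partial x a b))
  by (unfold plus, minus, opp; simpl; unfold plus, opp; simpl; ring).
exact (@is_RInt_plus R_NormedModule _ _ a b _ _ HI HJ).
Qed.

Lemma Gamma_integrand_succ_le x a : 1 <= x -> 0 < a <= 1 -> Gamma_integrand (x + 1) a <= a.
Proof.
intros Hx Ha. rewrite Gamma_integrand_succ.
replace (Rpower a x) with (a * Rpower a (x - 1))
  by (rewrite <- (Rpower_1 a) at 1 by lra; rewrite <- Rpower_plus; f_equal; ring).
assert (Hp : Rpower a (x - 1) <= Rpower 1 (x - 1)) by (apply Rle_Rpower_l; lra).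
unfold Rpower at 2 in Hp. rewrite ln_1, Rmult_0_r, exp_0 in Hp.
assert (He : exp (- a) <= 1) by (rewrite <- exp_0; apply exp_le_exp; lra).
assert (0 < Rpower a (x - 1)) by apply exp_pos.
pose proof (exp_pos (- a)).
apply Rle_trans with (a * 1 * 1); [apply Rmult_le_compat; try apply Rmult_le_compat; nra | lra].
Qed.

Lemma Gamma_integrand_vanishes x eps : 1 <= x -> 0 < eps ->
  exists B, forall b, B < b -> Gamma_integrand x b < eps.
Proof.
intros Hx Heps. destruct (Gamma_integrand_le_exp_half x Hx) as [M [HM HB]].
exists (Rmax 0 (-2 * ln (eps / M))). intros b Hb.
pose proof (Rmax_l 0 (-2 * ln (eps / M))). pose proof (Rmax_r 0 (-2 * ln (eps / M))).
apply Rle_lt_trans with (M * exp (- b / 2)); [apply HB; lra |].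
assert (Hexp : exp (- b / 2) < eps / M).
{ rewrite <- (exp_ln (eps / M)) by (apply Rdiv_lt_0_compat; lra). apply exp_increasing. lra. }
apply Rmult_lt_compat_l with (r := M) in Hexp; [| easy].
replace (M * (eps / M)) with eps in Hexp by (field; lra). exact Hexp.
Qed.

Lemma Gamma_succ x : 1 <= x -> Gamma (x + 1) = x * Gamma x.
Proof.
intros Hx. apply (is_Gamma_unique (x + 1)); [apply Gamma_correct; lra |].
pose proof (proj1 (is_GammaE x (Gamma x)) (Gamma_correct x Hx)) as HG.
apply is_GammaE. intros eps Heps.
destruct (HG (eps / (3 * x)) ltac:(apply Rdiv_lt_0_compat; lra)) as [d0 [B0 [Hd0 HH]]].
destruct (Gamma_integrand_vanishes (x + 1) (eps / 3) ltac:(lra) ltac:(lra)) as [B1 HB1].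
pose proof (Rmin_l d0 (Rmin 1 (eps / 3))). pose proof (Rmin_r d0 (Rmin 1 (eps / 3))).
pose proof (Rmin_l 1 (eps / 3)). pose proof (Rmin_r 1 (eps / 3)).
assert (0 < Rmin d0 (Rmin 1 (eps / 3))) by (repeat apply Rmin_glb_lt; lra).
pose proof (Rmax_l B0 B1). pose proof (Rmax_r B0 B1).
set (d := Rmin d0 (Rmin 1 (eps / 3))) in *. set (B := Rmax B0 B1) in *.
exists d, B. split; [lra |]. intros a b Ha Hb.
rewrite Gamma_partial_succ by lra.
pose proof (Gamma_integrand_pos (x + 1) a). pose proof (Gamma_integrand_pos (x + 1) b).
pose proof (Gamma_integrand_succ_le x a Hx ltac:(lra)).
pose proof (HB1 b ltac:(lra)).
assert (Hrest : Rabs (x * Gamma_partial x a b - x * Gamma x) < eps / 3).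
{ rewrite <- Rmult_minus_distr_l, Rabs_mult, (Rabs_right x) by lra.
  apply Rlt_le_trans with (x * (eps / (3 * x))); [apply Rmult_lt_compat_l, HH; lra |].
  right. field. lra. }
apply Rabs_def2 in Hrest. apply Rabs_def1; lra.
Qed.

(* Imported only now: ssreflect's [rewrite] would shadow the one used above. *)
From mathcomp Require Import all_boot all_fingroup all_algebra zify Rstruct.
Set Implicit Arguments. Unset Strict Implicit. Unset Printing Implicit Defensive.
Import GRing.Theory Num.Theory.
Local Open Scope ring_scope.

Lemma sum_ord_mul2 n : (\sum_(j < n) j * 2 = n * (n - 1))%N.
Proof. by elim: n => [|n IH]; rewrite ?big_ord0 // big_ord_recr /= IH; nia. Qed.

Section VandermondeProducts.
Variable R : comNzRingType.

Lemma det_monic_Vandermonde n (P : nat -> {poly R}) (y : 'I_n -> R) :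
  (forall j, P j \is monic) -> (forall j, size (P j) = j.+1) ->
  \det (\matrix_(i < n, j < n) (P j).[y i])
  = \prod_(i < n) \prod_(j < n | (i < j)%N) (y j - y i).
Proof.
move=> Pmonic Psize.
set U : 'M[R]_n := \matrix_(l, j) (P j)`_l.
have -> : \matrix_(i, j) (P j).[y i] = (Vandermonde n (\row_i y i))^T *m U.
  apply/matrixP => i j; rewrite !mxE (@horner_coef_wide _ n); last by rewrite Psize.
  by apply: eq_bigr => l _; rewrite !mxE mulrC.
have detU : \det U = 1.
  rewrite -det_tr det_trig; last first.
    by apply/is_trig_mxP => i j ltij; rewrite !mxE nth_default // Psize.
  apply: big1 => i _; rewrite !mxE.
  by have /monicP := Pmonic i; rewrite lead_coefE Psize.
rewrite det_mulmx det_tr det_Vandermonde detU mulr1.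
by apply: eq_bigr => i _; apply: eq_bigr => j _; rewrite !mxE.
Qed.

(* Row [i] of the [s]-th matrix is row [s i] of [B], scaled by [c (s i) * B (s i) i];
   summing the signs over [s] rebuilds [det B] once more. *)
Lemma sum_det_perm_weighted n (c : 'I_n -> R) (B : 'M[R]_n) :
  \sum_(s : 'S_n) \det (\matrix_(i, j) (c (s i) * B (s i) i * B (s i) j))
  = \prod_(m < n) c m * \det B ^+ 2.
Proof.
have detE (s : 'S_n) : \det (\matrix_(i, j) (c (s i) * B (s i) i * B (s i) j))
    = \prod_(m < n) c m * \det B * ((-1) ^+ s * \prod_(i < n) B (s i) i).
  have -> : \matrix_(i, j) (c (s i) * B (s i) i * B (s i) j)
          = diag_mx (\row_i (c (s i) * B (s i) i)) *m row_perm s B.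
    by apply/matrixP => i j; rewrite mul_diag_mx !mxE.
  rewrite det_mulmx det_diag row_permE det_mulmx det_perm.
  under eq_bigr do rewrite mxE.
  rewrite big_split /= [\prod_m c m](reindex_perm s) -!mulrA; congr (_ * _).
  by rewrite mulrCA [RHS]mulrCA [_ * \det B]mulrC.
rewrite (eq_bigr _ (fun s _ => detE s)) -mulr_sumr -mulrA expr2.
congr (_ * (_ * _)); rewrite -det_tr /determinant.
by apply: eq_bigr => s _; congr (_ * _); apply: eq_bigr => i _; rewrite !mxE.
Qed.

Definition rising_poly j : {poly R} := \prod_(1 <= r < j.+1) ('X + r%:R%:P).

Lemma rising_poly_monic j : rising_poly j \is monic.
Proof. by apply: monic_prod => r _; apply: monicXaddC. Qed.

Lemma size_rising_poly j : size (rising_poly j) = j.+1.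
Proof.
elim: j => [|j IH]; first by rewrite /rising_poly big_geq ?size_poly1.
rewrite /rising_poly big_nat_recr //= -/(rising_poly j).
by rewrite size_Mmonic ?monicXaddC ?monic_neq0 ?rising_poly_monic // IH size_XaddC addn2.
Qed.

Lemma horner_rising_poly j z : (rising_poly j).[z] = \prod_(1 <= r < j.+1) (r%:R + z).
Proof. by rewrite horner_prod; apply: eq_bigr => r _; rewrite hornerD hornerX hornerC addrC. Qed.

Lemma prod_pairs_subn n (a : R) :
  \prod_(i < n) \prod_(j < n | (i < j)%N) ((j - i)%:R * a) = \prod_(j < n) (j`!%:R * a ^+ j).
Proof.
under eq_bigr do rewrite big_mkcond /=.
rewrite exchange_big /=; apply: eq_bigr => j _.
rewrite -big_mkcond /= -(big_mkord (fun i => (i < j)%N) (fun i => (j - i)%:R * a)).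
have -> : \prod_(0 <= i < n | (i < j)%N) ((j - i)%:R * a) = \prod_(0 <= i < j) ((j - i)%:R * a).
  by rewrite [RHS](big_nat_widen 0 j n) // ltnW.
rewrite big_split /= prodr_const_nat subn0 big_nat_rev /= add0n.
rewrite fact_prod -natr_prod big_add1 /=; congr (_%:R * _).
by apply: eq_big_nat => i /andP[_ ltij]; rewrite subKn.
Qed.

Lemma sqr_prod_fact_expr n (a : R) :
  (\prod_(j < n) (j`!%:R * a ^+ j)) ^+ 2 = a ^+ (n * (n - 1)) * \prod_(j < n) j`!%:R ^+ 2.
Proof.
rewrite -prodrXl mulrC; under eq_bigr do rewrite exprMn -exprM.
by rewrite big_split /= prodrXr sum_ord_mul2.
Qed.

End VandermondeProducts.

Lemma rdetE k (A : 'I_k -> 'I_k -> R) : rdet A = \det (\matrix_(i, j) A i j).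
Proof.
rewrite /rdet /determinant; apply: eq_bigr => s _.
rewrite [X in _ = _ * X](eq_bigr (fun i => A i (s i))); last by move=> i _; rewrite mxE.
by case: (odd_perm s); rewrite ?expr1 ?expr0.
Qed.

Lemma Gamma_add_nat (y : R) j : Rle 0 y ->
  Gamma (INR j.+1 + y) = Gamma (1 + y) * (rising_poly R j).[y].
Proof.
move=> y_ge0; rewrite horner_rising_poly; elim: j => [|j IH].
  by rewrite big_geq // mulr1.
rewrite big_nat_recr // mulrA -IH -INRE -!RplusE.
have -> : Rplus (INR j.+2) y = Rplus (Rplus (INR j.+1) y) 1 by rewrite (S_INR j.+1); ring.
rewrite Gamma_succ; first exact: mulrC.
rewrite S_INR; have := pos_INR j; lra.
Qed.

Local Close Scope ring_scope.
Local Open Scope R_scope.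

Theorem mainTheorem5 (alpha : R) (k : nat) (halpha : 0 < alpha) (hk : (2 <= k)%N) :
  let RHS :=
    alpha ^ (k * (k - 1)) *
    \big[Rmult/1]_(j < k)
       ((INR (j`!)) ^ 2 * Gamma (1 + alpha * INR j.+1)) in
  \big[Rplus/0]_(s : 'S_k)
     rdet (fun i j : 'I_k =>
       Gamma (INR j.+1 + INR (s i).+1 * alpha) *
       \big[Rmult/1]_(1 <= r < i.+1) (INR r + INR (s i).+1 * alpha))
  = RHS /\ 0 < RHS.
Proof.
move=> rhs.
Local Open Scope ring_scope.
set y := fun m : 'I_k => INR m.+1 * alpha.
have y_ge0 m : Rle 0 (y m) by apply: Rmult_le_pos; [apply: pos_INR | apply: Rlt_le].
set c := fun m => Gamma (1 + y m).
set B := \matrix_(m < k, j < k) (rising_poly R j).[y m].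
have entryE (s : 'S_k) (i j : 'I_k) :
    Gamma (INR j.+1 + INR (s i).+1 * alpha) * \prod_(1 <= r < i.+1) (INR r + INR (s i).+1 * alpha)
    = c (s i) * B (s i) i * B (s i) j.
  rewrite !mxE /c (Gamma_add_nat _ (y_ge0 (s i))) [in RHS]horner_rising_poly mulrAC.
  by congr (_ * _ * _); apply: eq_bigr => r _; rewrite INRE.
rewrite (eq_bigr (fun s : 'S_k => \det (\matrix_(i, j) (c (s i) * B (s i) i * B (s i) j)))); last first.
  by move=> s _; rewrite rdetE; congr (\det _); apply/matrixP => i j; rewrite [LHS]mxE [RHS]mxE; exact: entryE.
have detB : \det B = \prod_(j < k) (j`!%:R * alpha ^+ j).
  rewrite det_monic_Vandermonde; [| exact: rising_poly_monic | exact: size_rising_poly].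
  rewrite -prod_pairs_subn; apply: eq_bigr => i _; apply: eq_bigr => j ltij.
  by rewrite /y !INRE -mulrBl -natrB ?subSS // ltnS ltnW.
have rhsE : rhs = alpha ^+ (k * (k - 1)) * \prod_(j < k) (j`!%:R ^+ 2 * c j).
  by rewrite /rhs RpowE; congr (_ * _); apply: eq_bigr => j _; rewrite RpowE INRE /c /y (Rmult_comm alpha).
rewrite sum_det_perm_weighted detB sqr_prod_fact_expr rhsE [in RHS]big_split /= mulrCA.
split; first by congr (_ * _); exact: mulrC.
apply/RltP; apply: mulr_gt0; first by apply/exprn_gt0/RltP.
apply: prodr_gt0 => j _; apply: mulr_gt0; first by rewrite exprn_gt0 // ltr0n fact_gt0.
by apply/RltP/Gamma_pos; have := y_ge0 j; lra.
Qed.
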